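(* For every integer $d\ge3$, the map $\nu\mapsto\vartheta_{d,\nu}$ is strictly increasing, and for every $\nu>0$ the map $d\mapsto\vartheta_{d,\nu}$ is strictly increasing. Moreover, for every $d\ge3$, $$\lim_{\nu\downarrow0}\vartheta_{d,\nu}=\vartheta_{d,0}=\frac{d-2}{d-1},\qquad \lim_{\nu\to\infty}\vartheta_{d,\nu}=1,$$ and for every $\nu>0$, $\lim_{d\to\infty}\vartheta_{d,\nu}=1$.
   Context: For $d\ge2$ and $\nu\in[0,\infty)$ let $\beta_d=\sqrt{d-1}$, $\rho_d=2\sqrt{d-1}/d$, let $\Delta_{d,\nu}$ be the continued fraction $\Delta_{d,\nu}=\cfrac{1}{a_1-\cfrac{1}{a_2-\cfrac{1}{a_3-\cdots}}}$ with $a_i=\frac{2+i\nu}{\rho_d}$ (convergent since $a_i\ge2$), and define $\vartheta_{d,\nu}=1-\Delta_{d,\nu}/\beta_d$. *)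

From Stdlib Require Import Reals.
From Coquelicot Require Import Coquelicot.
Open Scope R_scope.

Definition beta_d (d : nat) : R := sqrt (INR d - 1).
Definition rho_d (d : nat) : R := 2 * sqrt (INR d - 1) / INR d.

Definition cf_a (d : nat) (nu : R) (i : nat) : R := (2 + INR i * nu) / rho_d d.

(* cf_tail d nu k n = 1/(a_k - 1/(a_{k+1} - ... 1/a_{k+n-1})), truncated
   after n partial quotients (the empty tail is 0). *)
Fixpoint cf_tail (d : nat) (nu : R) (k n : nat) : R :=
  match n with
  | O => 0
  | S n' => / (cf_a d nu k - cf_tail d nu (S k) n')
  end.

Definition Delta_conv (d : nat) (nu : R) (n : nat) : R := cf_tail d nu 1 n.

Definition Delta (d : nat) (nu : R) : R := real (Lim_seq (Delta_conv d nu)).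

Definition theta (d : nat) (nu : R) : R := 1 - Delta d nu / beta_d d.

From Pilot Require Import Defs.
From Stdlib Require Import Reals Lra Lia.
From Coquelicot Require Import Coquelicot.
Open Scope R_scope.

(* Write beta = beta_d.  Every partial quotient is at least a_0 = 2 / rho_d = d / beta,
   and 1 / beta is a fixed point of x |-> 1 / (d / beta - x); hence all tails of the
   continued fraction lie in [0, 1 / beta], the convergents increase to Delta, and they
   are antitone in the partial quotients.  Since a_1 grows strictly with nu, and every
   a_i grows with d (rho_d is decreasing), Delta decreases strictly in nu and weakly in
   d, while beta grows: this gives both monotonicity statements.  For nu = 0 all the
   quotients equal d / beta and the convergents reach 1 / beta geometrically with ratio
   1 / (d - 1), so Delta_{d,0} = 1 / beta.  Each step x |-> 1 / (a - x) is 1-Lipschitz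
   because a - x >= beta >= 1, which controls the N-th convergent uniformly for small nu
   and yields right continuity at 0.  Finally Delta <= 1 / (a_1 - 1 / beta) <= rho_d / nu
   and Delta <= 1 / beta give the limits 1 as nu -> oo and as d -> oo. *)

Fixpoint cfrac (a : nat -> R) (k n : nat) : R :=
  match n with
  | O => 0
  | S n' => / (a k - cfrac a (S k) n')
  end.

Definition cfrac_value (a : nat -> R) : R := real (Lim_seq (cfrac a 1)).

Lemma is_lim_seq_le_const (u : nat -> R) (l M : R) :
  is_lim_seq u l -> (forall n, u n <= M) -> l <= M.
Proof. intros Hu HM. exact (is_lim_seq_le u (fun _ => M) l M HM Hu (is_lim_seq_const M)). Qed.

Section ContinuedFractionBounds.

Variables A c : R.
Hypothesis gap_pos : 0 < A - c.
Hypothesis inv_gap_le : / (A - c) <= c.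

Lemma tail_bound_pos : 0 < c.
Proof. pose proof (Rinv_0_lt_compat _ gap_pos). lra. Qed.

Section Bounded.

Variable a : nat -> R.
Hypothesis a_ge : forall i, A <= a i.

Lemma cfrac_bounds n k : 0 <= cfrac a k n <= c.
Proof.
  pose proof tail_bound_pos.
  revert k; induction n as [|n IH]; intros k; simpl; [lra|].
  destruct (IH (S k)). specialize (a_ge k).
  split; [left; apply Rinv_0_lt_compat; lra|].
  apply Rle_trans with (/ (A - c)); [apply Rinv_le_contravar|]; lra.
Qed.

Lemma cfrac_le_succ n k : cfrac a k n <= cfrac a k (S n).
Proof.
  revert k; induction n as [|n IH]; intros k.
  - simpl. pose proof tail_bound_pos. specialize (a_ge k).
    left; apply Rinv_0_lt_compat. lra.
  - change (/ (a k - cfrac a (S k) n) <= / (a k - cfrac a (S k) (S n))).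
    pose proof (IH (S k)). pose proof (cfrac_bounds (S n) (S k)). specialize (a_ge k).
    apply Rinv_le_contravar; lra.
Qed.

Lemma is_lim_cfrac_value : is_lim_seq (cfrac a 1) (cfrac_value a).
Proof.
  destruct (ex_finite_lim_seq_incr (cfrac a 1) c (fun n => cfrac_le_succ n 1)
    (fun n => proj2 (cfrac_bounds n 1))) as [l Hl].
  unfold cfrac_value. rewrite (is_lim_seq_unique _ _ Hl). exact Hl.
Qed.

Lemma cfrac_le_value n : cfrac a 1 n <= cfrac_value a.
Proof. exact (is_lim_seq_incr_compare _ _ is_lim_cfrac_value (fun n => cfrac_le_succ n 1) n). Qed.

Lemma cfrac_value_pos : 0 < cfrac_value a.
Proof.
  apply Rlt_le_trans with (cfrac a 1 1); [|apply cfrac_le_value].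
  simpl. pose proof (a_ge 1). pose proof tail_bound_pos. apply Rinv_0_lt_compat. lra.
Qed.

Lemma cfrac_value_le_head : cfrac_value a <= / (a 1%nat - c).
Proof.
  apply (is_lim_seq_le_const _ _ _ is_lim_cfrac_value). intros [|n]; simpl.
  - pose proof (a_ge 1). left; apply Rinv_0_lt_compat. lra.
  - pose proof (cfrac_bounds n 2). pose proof (a_ge 1). apply Rinv_le_contravar; lra.
Qed.

Lemma cfrac_value_le_bound : cfrac_value a <= c.
Proof.
  exact (is_lim_seq_le_const _ _ _ is_lim_cfrac_value (fun n => proj2 (cfrac_bounds n 1))).
Qed.

End Bounded.

Section Comparison.

Variables a b : nat -> R.
Hypothesis a_ge : forall i, A <= a i.
Hypothesis a_le_b : forall i, a i <= b i.

Let b_ge : forall i, A <= b i := fun i => Rle_trans _ _ _ (a_ge i) (a_le_b i).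

Lemma cfrac_antitone n k : cfrac b k n <= cfrac a k n.
Proof.
  revert k; induction n as [|n IH]; intros k; simpl; [lra|].
  pose proof (IH (S k)). pose proof (cfrac_bounds a a_ge n (S k)).
  pose proof (a_ge k). pose proof (a_le_b k).
  apply Rinv_le_contravar; lra.
Qed.

Lemma cfrac_value_antitone : cfrac_value b <= cfrac_value a.
Proof.
  exact (is_lim_seq_le_const _ _ _ (is_lim_cfrac_value b b_ge)
    (fun n => Rle_trans _ _ _ (cfrac_antitone n 1) (cfrac_le_value a a_ge n))).
Qed.

(* The first step already separates the convergents by a fixed amount. *)
Lemma cfrac_value_lt : a 1%nat < b 1%nat -> cfrac_value b < cfrac_value a.
Proof.
  intros Hab1.
  pose proof tail_bound_pos. pose proof (a_ge 1).
  set (eps := (b 1%nat - a 1%nat) / (a 1%nat * b 1%nat)).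
  assert (Heps : 0 < eps) by (apply Rdiv_lt_0_compat; nra).
  assert (Hstep : forall n, cfrac b 1 (S n) <= cfrac_value a - eps).
  { intro n. simpl.
    pose proof (cfrac_antitone n 2). pose proof (cfrac_bounds a a_ge n 2).
    pose proof (cfrac_le_value a a_ge (S n)). simpl in *.
    set (t := cfrac a 2 n) in *. set (u := cfrac b 2 n) in *.
    assert (/ (b 1%nat - u) <= / (b 1%nat - t)) by (apply Rinv_le_contravar; lra).
    assert (eps <= / (a 1%nat - t) - / (b 1%nat - t)).
    { replace (/ (a 1%nat - t) - / (b 1%nat - t))
        with ((b 1%nat - a 1%nat) / ((a 1%nat - t) * (b 1%nat - t))) by (field; lra).
      unfold eps, Rdiv. apply Rmult_le_compat_l; [lra|].
      apply Rinv_le_contravar; [nra|]. apply Rmult_le_compat; lra. }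
    lra. }
  assert (Hlim : is_lim_seq (fun n => cfrac b 1 (S n)) (cfrac_value b))
    by exact (proj1 (is_lim_seq_incr_1 _ _) (is_lim_cfrac_value b b_ge)).
  pose proof (is_lim_seq_le_const _ _ _ Hlim Hstep). lra.
Qed.

(* Each step is a contraction: the denominators are at least [A - c >= 1]. *)
Lemma cfrac_sub_le (delta : R) n k : 1 <= A - c ->
  (forall i, (i < k + n)%nat -> b i - a i <= delta) ->
  cfrac a k n - cfrac b k n <= INR n * delta.
Proof.
  intros Hgap1 Hdelta.
  revert k Hdelta.
  induction n as [|n IH]; intros k Hdelta; simpl cfrac; [simpl; lra|].
  pose proof (IH (S k) ltac:(intros i Hi; apply Hdelta; lia)).
  pose proof (cfrac_bounds a a_ge n (S k)). pose proof (cfrac_bounds b b_ge n (S k)).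
  pose proof (cfrac_antitone n (S k)). pose proof (Hdelta k ltac:(lia)).
  pose proof (a_ge k). pose proof (a_le_b k). rewrite S_INR.
  set (s := cfrac a (S k) n) in *. set (t := cfrac b (S k) n) in *.
  assert (Hden : 1 <= (a k - s) * (b k - t)).
  { rewrite <- (Rmult_1_r 1). apply Rmult_le_compat; lra. }
  replace (/ (a k - s) - / (b k - t))
    with ((b k - a k + (s - t)) / ((a k - s) * (b k - t))) by (field; lra).
  apply Rle_trans with (b k - a k + (s - t)); [|lra].
  apply Rmult_le_reg_r with ((a k - s) * (b k - t)); [lra|].
  unfold Rdiv. rewrite Rmult_assoc, Rinv_l by lra. nra.
Qed.

End Comparison.

Section Constant.

Variable a : nat -> R.
Hypothesis a_const : forall i, a i = A.
Hypothesis bound_fixed : c * (A - c) = 1.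

Lemma cfrac_const_defect n k : c - cfrac a k n <= c * (c * c) ^ n.
Proof.
  assert (a_ge : forall i, A <= a i) by (intro i; rewrite a_const; lra).
  pose proof tail_bound_pos.
  revert k; induction n as [|n IH]; intros k; simpl cfrac; [simpl; lra|].
  pose proof (IH (S k)). pose proof (cfrac_bounds a a_ge n (S k)).
  rewrite a_const. set (t := cfrac a (S k) n) in *.
  replace (c - / (A - t)) with ((c * (A - t) - 1) / (A - t)) by (field; lra).
  replace (c * (A - t) - 1) with (c * (c - t)) by (rewrite <- bound_fixed; ring).
  apply Rle_trans with (c * (c - t) * c).
  - unfold Rdiv. apply Rmult_le_compat_l; [nra|].
    assert (Hfix : / (A - c) = c).
    { apply Rmult_eq_reg_r with (A - c); [|lra]. rewrite Rinv_l; lra. }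
    rewrite <- Hfix. apply Rinv_le_contravar; lra.
  - simpl. nra.
Qed.

Lemma cfrac_value_const : c * c < 1 -> cfrac_value a = c.
Proof.
  intros Hc. pose proof tail_bound_pos.
  assert (a_ge : forall i, A <= a i) by (intro i; rewrite a_const; lra).
  assert (Hlim : is_lim_seq (cfrac a 1) c).
  { apply is_lim_seq_le_le with (fun n => c - c * (c * c) ^ n) (fun _ => c).
    - intro n. pose proof (cfrac_const_defect n 1). pose proof (cfrac_bounds a a_ge n 1). lra.
    - replace (Finite c) with (Finite (c - c * 0)) by (f_equal; ring).
      apply is_lim_seq_minus'; [apply is_lim_seq_const|].
      apply is_lim_seq_mult'; [apply is_lim_seq_const|].
      apply is_lim_seq_geom. rewrite Rabs_pos_eq; nra.
    - apply is_lim_seq_const. }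
  unfold cfrac_value. rewrite (is_lim_seq_unique _ _ Hlim). reflexivity.
Qed.

End Constant.
End ContinuedFractionBounds.

Lemma cf_tail_eq_cfrac d nu n k : cf_tail d nu k n = cfrac (cf_a d nu) k n.
Proof. revert k; induction n as [|n IH]; intros k; simpl; rewrite ?IH; reflexivity. Qed.

Lemma Delta_eq_cfrac_value d nu : Defs.Delta d nu = cfrac_value (cf_a d nu).
Proof.
  unfold Defs.Delta, cfrac_value, Delta_conv.
  f_equal. apply Lim_seq_ext. intro n. apply cf_tail_eq_cfrac.
Qed.

Lemma sqrt_pred_div_antitone x y : 2 <= x <= y -> sqrt (y - 1) / y <= sqrt (x - 1) / x.
Proof.
  intros [Hx Hxy].
  apply Rsqr_incr_0_var; [|apply Rdiv_le_0_compat; [apply sqrt_pos|lra]].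
  unfold Rsqr.
  replace (sqrt (y - 1) / y * (sqrt (y - 1) / y))
    with (sqrt (y - 1) * sqrt (y - 1) * (x * x) / ((x * x) * (y * y))) by (field; lra).
  replace (sqrt (x - 1) / x * (sqrt (x - 1) / x))
    with (sqrt (x - 1) * sqrt (x - 1) * (y * y) / ((x * x) * (y * y))) by (field; lra).
  rewrite !sqrt_sqrt by lra.
  unfold Rdiv. apply Rmult_le_compat_r.
  { left; apply Rinv_0_lt_compat. apply Rmult_lt_0_compat; apply Rmult_lt_0_compat; lra. }
  assert (0 <= (y - x) * ((x - 1) * (y - 1) - 1)) by (apply Rmult_le_pos; nra).
  nra.
Qed.

Lemma beta_d_pos d : (2 <= d)%nat -> 0 < beta_d d.
Proof. intros Hd. apply sqrt_lt_R0. apply le_INR in Hd. simpl in Hd. lra. Qed.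

Lemma beta_d_sqr d : (1 <= d)%nat -> beta_d d * beta_d d = INR d - 1.
Proof. intros Hd. apply sqrt_sqrt. apply le_INR in Hd. simpl in Hd. lra. Qed.

Lemma beta_d_lt d1 d2 : (2 <= d1)%nat -> (d1 < d2)%nat -> beta_d d1 < beta_d d2.
Proof.
  intros H1 H12. apply le_INR in H1. apply lt_INR in H12. simpl in H1.
  apply sqrt_lt_1; lra.
Qed.

Lemma rho_d_pos d : (2 <= d)%nat -> 0 < rho_d d.
Proof.
  intros Hd. pose proof (beta_d_pos d Hd). apply le_INR in Hd. simpl in Hd.
  unfold rho_d. fold (beta_d d). apply Rdiv_lt_0_compat; lra.
Qed.

Lemma rho_d_antitone d1 d2 : (2 <= d1)%nat -> (d1 <= d2)%nat -> rho_d d2 <= rho_d d1.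
Proof.
  intros H1 H12. apply le_INR in H1, H12. simpl in H1.
  unfold rho_d, Rdiv. rewrite !Rmult_assoc. apply Rmult_le_compat_l; [lra|].
  apply sqrt_pred_div_antitone; lra.
Qed.

Section FixedDegree.

Variable d : nat.
Hypothesis d_ge2 : (2 <= d)%nat.

(* [2 / rho_d d = d / beta_d d] bounds every partial quotient from below, and
   [1 / beta_d d] is the matching bound on the tails. *)
Lemma base_gap : 2 / rho_d d - / beta_d d = beta_d d.
Proof.
  pose proof (beta_d_pos d d_ge2). pose proof (beta_d_sqr d ltac:(lia)).
  unfold rho_d. fold (beta_d d).
  replace (INR d) with (beta_d d * beta_d d + 1) by lra.
  field. split; nra.
Qed.

Lemma base_gap_pos : 0 < 2 / rho_d d - / beta_d d.
Proof. rewrite base_gap. exact (beta_d_pos d d_ge2). Qed.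

Lemma base_inv_gap_le : / (2 / rho_d d - / beta_d d) <= / beta_d d.
Proof. rewrite base_gap. lra. Qed.

Lemma cf_a_ge_base nu i : 0 <= nu -> 2 / rho_d d <= cf_a d nu i.
Proof.
  intros Hnu. pose proof (rho_d_pos d d_ge2). pose proof (pos_INR i).
  unfold cf_a, Rdiv. apply Rmult_le_compat_r; [left; apply Rinv_0_lt_compat; lra|].
  nra.
Qed.

Lemma Delta_bounds nu : 0 <= nu -> 0 < Defs.Delta d nu <= / beta_d d.
Proof.
  intros Hnu. rewrite Delta_eq_cfrac_value. split.
  - exact (cfrac_value_pos _ _ base_gap_pos base_inv_gap_le _
      (fun i => cf_a_ge_base nu i Hnu)).
  - exact (cfrac_value_le_bound _ _ base_gap_pos base_inv_gap_le _
      (fun i => cf_a_ge_base nu i Hnu)).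
Qed.

Lemma Delta_lt_nu nu1 nu2 : 0 <= nu1 -> nu1 < nu2 -> Defs.Delta d nu2 < Defs.Delta d nu1.
Proof.
  intros H1 H12. pose proof (rho_d_pos d d_ge2). rewrite !Delta_eq_cfrac_value.
  apply (cfrac_value_lt _ _ base_gap_pos base_inv_gap_le);
    [intro i; apply cf_a_ge_base; exact H1| |].
  - intro i. pose proof (pos_INR i). unfold cf_a, Rdiv.
    apply Rmult_le_compat_r; [left; apply Rinv_0_lt_compat; lra|]. nra.
  - unfold cf_a, Rdiv. simpl INR.
    apply Rmult_lt_compat_r; [apply Rinv_0_lt_compat|]; lra.
Qed.

Lemma theta_lt_nu nu1 nu2 : 0 <= nu1 -> nu1 < nu2 -> theta d nu1 < theta d nu2.
Proof.
  intros H1 H12. pose proof (Delta_lt_nu nu1 nu2 H1 H12). pose proof (beta_d_pos d d_ge2).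
  unfold theta, Rdiv. apply Rplus_lt_compat_l, Ropp_lt_contravar.
  apply Rmult_lt_compat_r; [apply Rinv_0_lt_compat|]; lra.
Qed.

Lemma Delta_zero : (3 <= d)%nat -> Defs.Delta d 0 = / beta_d d.
Proof.
  intros Hd3. pose proof (beta_d_pos d d_ge2). pose proof (beta_d_sqr d ltac:(lia)).
  apply le_INR in Hd3. simpl in Hd3.
  rewrite Delta_eq_cfrac_value.
  apply (cfrac_value_const _ _ base_gap_pos base_inv_gap_le).
  - intro i. unfold cf_a. rewrite Rmult_0_r, Rplus_0_r. reflexivity.
  - rewrite base_gap. field. lra.
  - rewrite <- Rinv_mult, H0. rewrite <- Rinv_1. apply Rinv_lt_contravar; lra.
Qed.

Lemma theta_zero : (3 <= d)%nat -> theta d 0 = (INR d - 2) / (INR d - 1).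
Proof.
  intros Hd3. pose proof (beta_d_pos d d_ge2). pose proof (beta_d_sqr d ltac:(lia)).
  unfold theta. rewrite Delta_zero by exact Hd3.
  replace (INR d) with (beta_d d * beta_d d + 1) by lra.
  field. split; nra.
Qed.

Lemma theta_lt_1 nu : 0 <= nu -> theta d nu < 1.
Proof.
  intros Hnu. pose proof (Delta_bounds nu Hnu). pose proof (beta_d_pos d d_ge2).
  unfold theta. assert (0 < Defs.Delta d nu / beta_d d) by (apply Rdiv_lt_0_compat; lra).
  lra.
Qed.

Lemma theta_ge_pred nu : 0 <= nu -> 1 - / (INR d - 1) <= theta d nu.
Proof.
  intros Hnu. pose proof (Delta_bounds nu Hnu). pose proof (beta_d_pos d d_ge2).
  unfold theta. rewrite <- (beta_d_sqr d ltac:(lia)), Rinv_mult.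
  unfold Rdiv. apply Rplus_le_compat_l, Ropp_le_contravar.
  apply Rmult_le_compat_r; [left; apply Rinv_0_lt_compat|]; lra.
Qed.

(* [Delta <= 1 / (a_1 - 1 / beta_d)] and
   [a_1 - 1 / beta_d = beta_d + nu / rho_d >= nu / rho_d]. *)
Lemma theta_ge_inv nu : 0 < nu -> 1 - rho_d d / beta_d d / nu <= theta d nu.
Proof.
  intros Hnu. pose proof (rho_d_pos d d_ge2). pose proof (beta_d_pos d d_ge2).
  assert (Hhead : Defs.Delta d nu <= rho_d d / nu).
  { rewrite Delta_eq_cfrac_value.
    eapply Rle_trans.
    - exact (cfrac_value_le_head _ _ base_gap_pos base_inv_gap_le _
        (fun i => cf_a_ge_base nu i ltac:(lra))).
    - replace (cf_a d nu 1 - / beta_d d) with (2 / rho_d d - / beta_d d + nu / rho_d d)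
        by (unfold cf_a; simpl INR; field; lra).
      rewrite base_gap. replace (rho_d d / nu) with (/ (nu / rho_d d)) by (field; lra).
      apply Rinv_le_contravar; [apply Rdiv_lt_0_compat|]; lra. }
  unfold theta. apply Rplus_le_compat_l, Ropp_le_contravar.
  replace (rho_d d / beta_d d / nu) with (rho_d d / nu / beta_d d) by (field; lra).
  unfold Rdiv at 1 3. apply Rmult_le_compat_r; [left; apply Rinv_0_lt_compat|]; lra.
Qed.

Lemma is_lim_theta_p_infty : is_lim (theta d) p_infty 1.
Proof.
  set (K := rho_d d / beta_d d).
  apply (is_lim_le_le_loc (fun nu => 1 - K * / nu) (fun _ => 1)).
  - exists 0. intros nu Hnu. split.
    + apply theta_ge_inv. exact Hnu.
    + left. apply theta_lt_1. lra.
  - replace (Finite 1) with (Finite (1 - K * 0)) by (f_equal; ring).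
    apply is_lim_minus'; [apply is_lim_const|].
    apply (is_lim_scal_l (fun nu => / nu) K p_infty 0).
    apply (is_lim_inv (fun nu => nu) p_infty p_infty); [apply is_lim_id|discriminate].
  - apply is_lim_const.
Qed.

(* The convergents at [nu = 0] approach [1 / beta_d] geometrically, and switching
   on [nu] moves the [N]-th convergent by at most [N * (N nu / rho_d)]. *)
Lemma Delta_ge_defect nu N : 0 <= nu ->
  / beta_d d - / beta_d d * (/ beta_d d * / beta_d d) ^ N - INR N * (INR N * nu / rho_d d)
  <= Defs.Delta d nu.
Proof.
  intros Hnu. pose proof (rho_d_pos d d_ge2). pose proof (beta_d_pos d d_ge2).
  assert (Hbeta1 : 1 <= beta_d d).
  { pose proof (beta_d_sqr d ltac:(lia)). apply le_INR in d_ge2. simpl in d_ge2. nra. }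
  assert (Hconst : forall i, cf_a d 0 i = 2 / rho_d d)
    by (intro i; unfold cf_a; rewrite Rmult_0_r, Rplus_0_r; reflexivity).
  assert (Hmono : forall i, cf_a d 0 i <= cf_a d nu i).
  { intro i. pose proof (pos_INR i). unfold cf_a, Rdiv.
    apply Rmult_le_compat_r; [left; apply Rinv_0_lt_compat; lra|]. nra. }
  assert (Hstep : forall i, (i < 1 + N)%nat -> cf_a d nu i - cf_a d 0 i <= INR N * nu / rho_d d).
  { intros i Hi. assert (INR i <= INR N) by (apply le_INR; lia).
    unfold cf_a. replace ((2 + INR i * nu) / rho_d d - (2 + INR i * 0) / rho_d d)
      with (INR i * nu / rho_d d) by (field; lra).
    unfold Rdiv. apply Rmult_le_compat_r; [left; apply Rinv_0_lt_compat; lra|]. nra. }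
  pose proof (cfrac_const_defect _ _ base_gap_pos base_inv_gap_le _ Hconst
    ltac:(rewrite base_gap; field; lra) N 1).
  pose proof (cfrac_sub_le _ _ base_gap_pos base_inv_gap_le _ _
    (fun i => cf_a_ge_base 0 i (Rle_refl 0)) Hmono _ N 1
    ltac:(rewrite base_gap; exact Hbeta1) Hstep).
  pose proof (cfrac_le_value _ _ base_gap_pos base_inv_gap_le _
    (fun i => cf_a_ge_base nu i Hnu) N).
  rewrite Delta_eq_cfrac_value. lra.
Qed.

Lemma Delta_near_zero : (3 <= d)%nat -> forall e, 0 < e ->
  exists delta, 0 < delta /\ forall nu, 0 <= nu < delta -> / beta_d d - e < Defs.Delta d nu.
Proof.
  intros Hd3 e He. pose proof (rho_d_pos d d_ge2). pose proof (beta_d_pos d d_ge2).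
  set (c := / beta_d d).
  assert (Hc : 0 < c) by (apply Rinv_0_lt_compat; lra).
  assert (Hq : 0 <= c * c < 1).
  { unfold c. rewrite <- Rinv_mult, (beta_d_sqr d ltac:(lia)).
    apply le_INR in Hd3. simpl in Hd3.
    split; [left; apply Rinv_0_lt_compat; lra|].
    rewrite <- Rinv_1. apply Rinv_lt_contravar; lra. }
  destruct (pow_lt_1_zero (c * c) ltac:(rewrite Rabs_pos_eq; lra) (e / 2 / c)
    ltac:(apply Rdiv_lt_0_compat; lra)) as [N HN].
  specialize (HN N (le_n N)). rewrite Rabs_pos_eq in HN by (apply pow_le; lra).
  assert (Hgeom : c * (c * c) ^ N < e / 2).
  { apply (Rmult_lt_compat_l c) in HN; [|lra].
    replace (c * (e / 2 / c)) with (e / 2) in HN by (field; lra). exact HN. }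
  set (M := INR N * INR N).
  assert (HM : 0 <= M) by (unfold M; pose proof (pos_INR N); nra).
  exists (e * rho_d d / (2 * (M + 1))). split; [apply Rdiv_lt_0_compat; nra|].
  intros nu [Hnu Hnu_lt].
  pose proof (Delta_ge_defect nu N Hnu) as Hdefect.
  assert (Hshift : INR N * (INR N * nu / rho_d d) < e / 2).
  { replace (INR N * (INR N * nu / rho_d d)) with (M * nu / rho_d d) by (unfold M; field; lra).
    apply Rlt_div_l; [lra|].
    apply Rlt_div_r in Hnu_lt; [|lra].
    nra. }
  fold c in Hdefect. lra.
Qed.

Lemma theta_right_continuous_0 : (3 <= d)%nat ->
  filterlim (theta d) (at_right 0) (locally (theta d 0)).
Proof.
  intros Hd3. pose proof (beta_d_pos d d_ge2).
  apply filterlim_locally. intros eps.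
  destruct (Delta_near_zero Hd3 (eps * beta_d d)) as [delta [Hdelta Hnear]].
  { pose proof (cond_pos eps). nra. }
  exists (mkposreal delta Hdelta). intros nu Hnu Hpos.
  change (Rabs (nu - 0) < delta) in Hnu. rewrite Rminus_0_r, Rabs_pos_eq in Hnu by lra.
  change (Rabs (theta d nu - theta d 0) < eps).
  pose proof (Hnear nu ltac:(lra)). pose proof (Delta_bounds nu ltac:(lra)).
  unfold theta. rewrite Delta_zero by exact Hd3.
  replace (1 - Defs.Delta d nu / beta_d d - (1 - / beta_d d / beta_d d))
    with ((/ beta_d d - Defs.Delta d nu) / beta_d d) by (field; lra).
  rewrite Rabs_pos_eq by (apply Rdiv_le_0_compat; lra).
  apply Rlt_div_l; lra.
Qed.

End FixedDegree.

Lemma Delta_antitone_d nu d1 d2 : 0 <= nu -> (2 <= d1)%nat -> (d1 <= d2)%nat ->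
  Defs.Delta d2 nu <= Defs.Delta d1 nu.
Proof.
  intros Hnu H1 H12. pose proof (rho_d_pos d2 ltac:(lia)).
  pose proof (rho_d_antitone d1 d2 H1 H12).
  rewrite !Delta_eq_cfrac_value.
  apply (cfrac_value_antitone _ _ (base_gap_pos d1 H1) (base_inv_gap_le d1 H1));
    [intro i; apply cf_a_ge_base; assumption|].
  intro i. pose proof (pos_INR i). unfold cf_a, Rdiv.
  apply Rmult_le_compat_l; [nra|]. apply Rinv_le_contravar; lra.
Qed.

Lemma theta_lt_d nu d1 d2 : 0 <= nu -> (2 <= d1)%nat -> (d1 < d2)%nat ->
  theta d1 nu < theta d2 nu.
Proof.
  intros Hnu H1 H12.
  pose proof (Delta_antitone_d nu d1 d2 Hnu H1 ltac:(lia)).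
  pose proof (Delta_bounds d1 H1 nu Hnu). pose proof (Delta_bounds d2 ltac:(lia) nu Hnu).
  pose proof (beta_d_pos d1 H1). pose proof (beta_d_lt d1 d2 H1 H12).
  unfold theta. apply Rplus_lt_compat_l, Ropp_lt_contravar.
  apply Rle_lt_trans with (Defs.Delta d1 nu / beta_d d2).
  - unfold Rdiv. apply Rmult_le_compat_r; [left; apply Rinv_0_lt_compat|]; lra.
  - unfold Rdiv. apply Rmult_lt_compat_l; [lra|]. apply Rinv_lt_contravar; nra.
Qed.

Lemma is_lim_seq_theta_d nu : 0 <= nu -> is_lim_seq (fun d => theta d nu) 1.
Proof.
  intros Hnu.
  apply is_lim_seq_le_le_loc with (fun d => 1 - / (INR d - 1)) (fun _ => 1).
  - exists 2%nat. intros d Hd. split.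
    + exact (theta_ge_pred d Hd nu Hnu).
    + left. exact (theta_lt_1 d Hd nu Hnu).
  - replace (Finite 1) with (Finite (1 - 0)) by (f_equal; ring).
    apply is_lim_seq_minus'; [apply is_lim_seq_const|].
    apply (is_lim_seq_inv (fun d => INR d - 1) p_infty); [|discriminate].
    eapply is_lim_seq_minus; [apply is_lim_seq_INR|apply is_lim_seq_const|easy].
  - apply is_lim_seq_const.
Qed.

Theorem proposition2p7 :
  (forall d : nat, (3 <= d)%nat ->
     forall nu1 nu2 : R, 0 <= nu1 -> nu1 < nu2 -> theta d nu1 < theta d nu2) /\
  (forall nu : R, 0 < nu ->
     forall d1 d2 : nat, (3 <= d1)%nat -> (d1 < d2)%nat ->
       theta d1 nu < theta d2 nu) /\
  (forall d : nat, (3 <= d)%nat ->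
     filterlim (theta d) (at_right 0) (locally (theta d 0)) /\
     theta d 0 = (INR d - 2) / (INR d - 1) /\
     is_lim (theta d) p_infty 1) /\
  (forall nu : R, 0 < nu -> is_lim_seq (fun d : nat => theta d nu) 1).
Proof.
  split; [|split; [|split]].
  - intros d Hd nu1 nu2 H1 H12. exact (theta_lt_nu d ltac:(lia) nu1 nu2 H1 H12).
  - intros nu Hnu d1 d2 H1 H12. exact (theta_lt_d nu d1 d2 ltac:(lra) ltac:(lia) H12).
  - intros d Hd. assert (Hd2 : (2 <= d)%nat) by lia. split; [|split].
    + exact (theta_right_continuous_0 d Hd2 Hd).
    + exact (theta_zero d Hd2 Hd).
    + exact (is_lim_theta_p_infty d Hd2).
  - intros nu Hnu. apply is_lim_seq_theta_d. lra.
Qed.
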